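(* Let $t\ge 2$ be an integer and let $0\le i<j<k\le t-2$ be integers. Let $p_i\in D_i$, $p_j\in D_j$, $p_k\in D_k$. Then $(p_i,p_j,p_k)$ is a right turn (i.e., the three points are in clockwise orientation).
   Context: Let $t\ge 2$ be an integer. For $0\le i\le t-3$ define the vector $v_i:=(3(t-i),-3i)$, and define points $w_0:=(0,0)$ and $w_{i+1}:=w_i+v_i$ for $i=0,\dots,t-3$. For $i=0,\dots,t-2$, let $C_i$ be the closed unit square whose lower left corner is $w_i$, and let $D_i:=\{((t+1)4^{t+1}x,\,(t+1)4^{t+1}y):(x,y)\in C_i\}$ be $C_i$ scaled by the factor $(t+1)4^{t+1}$. *)

From Stdlib Require Import Reals Lra Lia.
Open Scope R_scope.

Definition point := (R * R)%type.

Definition vvec (t i : nat) : point :=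
  (3 * (INR t - INR i), - (3 * INR i)).

Fixpoint wpt (t i : nat) : point :=
  match i with
  | O => (0, 0)
  | S i' => (fst (wpt t i') + fst (vvec t i'), snd (wpt t i') + snd (vvec t i'))
  end.

Definition in_C (t i : nat) (q : point) : Prop :=
  fst (wpt t i) <= fst q <= fst (wpt t i) + 1 /\
  snd (wpt t i) <= snd q <= snd (wpt t i) + 1.

Definition scale_factor (t : nat) : R := (INR t + 1) * 4 ^ (t + 1).

Definition in_D (t i : nat) (p : point) : Prop :=
  exists q : point, in_C t i q /\
    p = (scale_factor t * fst q, scale_factor t * snd q).

Definition orient (p q r : point) : R :=
  (fst q - fst p) * (snd r - snd p) - (snd q - snd p) * (fst r - fst p).

Definition right_turn (p q r : point) : Prop := orient p q r < 0.

From Stdlib Require Import Reals Lra Lia Psatz.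
Open Scope R_scope.

(** The corners [w_n] lie on an explicit parabola, and the orientation of
    three corners [w_i, w_j, w_k] is [-(9/2) t (j-i)(k-j)(k-i)], which grows
    cubically.  Moving each point inside its unit square changes the
    orientation by at most the length of the staircase [w_i -> w_j -> w_k]
    plus 2, which is only [3t(k-i) + 2]; so the squares [C_i] are already in
    clockwise position, and scaling by a positive factor preserves the sign. *)

Lemma orient_scale (s : R) (p q r : point) :
  orient (s * fst p, s * snd p) (s * fst q, s * snd q) (s * fst r, s * snd r)
  = s * s * orient p q r.
Proof. unfold orient; simpl; ring. Qed.

Lemma scale_factor_gt0 (t : nat) : 0 < scale_factor t.
Proof.
  unfold scale_factor; apply Rmult_lt_0_compat.
  - pose proof (pos_INR t); lra.
  - apply pow_lt; lra.
Qed.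

Lemma orient_perturb (u v w p q r : point) :
  fst u <= fst v <= fst w -> snd w <= snd v <= snd u ->
  fst u <= fst p <= fst u + 1 /\ snd u <= snd p <= snd u + 1 ->
  fst v <= fst q <= fst v + 1 /\ snd v <= snd q <= snd v + 1 ->
  fst w <= fst r <= fst w + 1 /\ snd w <= snd r <= snd w + 1 ->
  orient u v w + (fst w - fst u) + (snd u - snd w) + 2 < 0 ->
  orient p q r < 0.
Proof.
  intros [Huv Hvw] [Hwv Hvu] [[Hp1 Hp2] [Hp3 Hp4]] [[Hq1 Hq2] [Hq3 Hq4]]
    [[Hr1 Hr2] [Hr3 Hr4]] Hneg.
  unfold orient in *.
  set (ax := fst v - fst u); set (ay := snd v - snd u).
  set (bx := fst w - fst v); set (by_ := snd w - snd v).
  set (ex := (fst q - fst v) - (fst p - fst u)).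
  set (ey := (snd q - snd v) - (snd p - snd u)).
  set (fx := (fst r - fst w) - (fst q - fst v)).
  set (fy := (snd r - snd w) - (snd q - snd v)).
  replace ((fst q - fst p) * (snd r - snd p) - (snd q - snd p) * (fst r - fst p))
    with ((ax + ex) * (by_ + fy) - (ay + ey) * (bx + fx))
    by (unfold ax, ay, bx, by_, ex, ey, fx, fy; ring).
  replace ((fst v - fst u) * (snd w - snd u) - (snd v - snd u) * (fst w - fst u))
    with (ax * by_ - ay * bx) in Hneg by (unfold ax, ay, bx, by_; ring).
  assert (-1 <= ex <= 1) by (unfold ex; lra).
  assert (-1 <= ey <= 1) by (unfold ey; lra).
  assert (-1 <= fx <= 1) by (unfold fx; lra).
  assert (-1 <= fy <= 1) by (unfold fy; lra).
  assert (0 <= ax) by (unfold ax; lra).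
  assert (ay <= 0) by (unfold ay; lra).
  assert (0 <= bx) by (unfold bx; lra).
  assert (by_ <= 0) by (unfold by_; lra).
  assert (ax * fy <= ax) by nra.
  assert (- ay * fx <= - ay) by nra.
  assert (ex * by_ <= - by_) by nra.
  assert (- ey * bx <= bx) by nra.
  assert (ex * fy <= 1) by nra.
  assert (- ey * fx <= 1) by nra.
  unfold ax, ay, bx, by_ in *; nra.
Qed.

Lemma wpt_fst_closed (t n : nat) :
  fst (wpt t n) = 3 * (INR n * INR t - INR n * (INR n - 1) / 2).
Proof.
  induction n as [|n IH]; simpl wpt; simpl fst.
  - simpl; lra.
  - rewrite IH; unfold vvec; simpl fst; rewrite S_INR; lra.
Qed.

Lemma wpt_snd_closed (t n : nat) :
  snd (wpt t n) = - (3 * (INR n * (INR n - 1) / 2)).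
Proof.
  induction n as [|n IH]; simpl wpt; simpl snd.
  - simpl; lra.
  - rewrite IH; unfold vvec; simpl snd; rewrite S_INR; lra.
Qed.

Lemma wpt_fst_sub_snd (t n : nat) :
  fst (wpt t n) - snd (wpt t n) = 3 * INR n * INR t.
Proof. rewrite wpt_fst_closed, wpt_snd_closed; field. Qed.

Lemma wpt_fst_le (t m n : nat) :
  (m <= n)%nat -> (n <= t)%nat -> fst (wpt t m) <= fst (wpt t n).
Proof.
  intros Hmn Hnt; rewrite !wpt_fst_closed.
  apply le_INR in Hmn; apply le_INR in Hnt; pose proof (pos_INR m).
  apply Rge_le, Rminus_ge; replace (3 * (INR n * INR t - INR n * (INR n - 1) / 2)
           - 3 * (INR m * INR t - INR m * (INR m - 1) / 2))
    with (3 * (INR n - INR m) * (INR t - (INR m + INR n - 1) / 2)) by field.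
  apply Rle_ge, Rmult_le_pos; lra.
Qed.

Lemma wpt_snd_le (t m n : nat) :
  (m <= n)%nat -> snd (wpt t n) <= snd (wpt t m).
Proof.
  induction 1 as [|n _ IH]; [lra|].
  simpl wpt; simpl snd; unfold vvec; simpl snd.
  pose proof (pos_INR n); lra.
Qed.

Lemma orient_wpt (t i j k : nat) :
  orient (wpt t i) (wpt t j) (wpt t k)
  = - (9 / 2) * INR t * (INR j - INR i) * (INR k - INR j) * (INR k - INR i).
Proof. unfold orient; rewrite !wpt_fst_closed, !wpt_snd_closed; field. Qed.

Lemma orient_C_lt0 (t i j k : nat) (qi qj qk : point) :
  (2 <= t)%nat -> (i < j)%nat -> (j < k)%nat -> (k <= t)%nat ->
  in_C t i qi -> in_C t j qj -> in_C t k qk ->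
  orient qi qj qk < 0.
Proof.
  intros Ht Hij Hjk Hkt Hi Hj Hk.
  apply (orient_perturb (wpt t i) (wpt t j) (wpt t k)); auto.
  - split; apply wpt_fst_le; lia.
  - split; apply wpt_snd_le; lia.
  - rewrite orient_wpt.
    assert (Hstair : (fst (wpt t k) - fst (wpt t i)) + (snd (wpt t i) - snd (wpt t k))
                     = 3 * (INR t * (INR k - INR i))).
    { pose proof (wpt_fst_sub_snd t i); pose proof (wpt_fst_sub_snd t k); lra. }
    apply (le_INR 2) in Ht; simpl INR in Ht.
    assert (Ha : 1 <= INR j - INR i) by (apply le_INR in Hij; rewrite S_INR in Hij; lra).
    assert (Hb : 1 <= INR k - INR j) by (apply le_INR in Hjk; rewrite S_INR in Hjk; lra).
    set (a := INR j - INR i) in *; set (b := INR k - INR j) in *.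
    replace (INR k - INR i) with (a + b) in * by (unfold a, b; ring).
    set (c := INR t * (a + b)) in *.
    assert (Hc : 4 <= c) by (unfold c; nra).
    assert (Hab : 1 <= a * b) by nra.
    replace (- (9 / 2) * INR t * a * b * (a + b)) with (- (9 / 2) * c * (a * b))
      by (unfold c; ring).
    assert (c <= c * (a * b)) by (rewrite <- (Rmult_1_r c) at 1; apply Rmult_le_compat_l; lra).
    lra.
Qed.

Theorem lemma6 (t i j k : nat) (pi pj pk : point) :
  (2 <= t)%nat -> (i < j)%nat -> (j < k)%nat -> (k <= t - 2)%nat ->
  in_D t i pi -> in_D t j pj -> in_D t k pk ->
  right_turn pi pj pk.
Proof.
  intros Ht Hij Hjk Hk [qi [Hqi ->]] [qj [Hqj ->]] [qk [Hqk ->]].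
  unfold right_turn; rewrite orient_scale.
  pose proof (scale_factor_gt0 t) as Hs.
  assert (Horient : orient qi qj qk < 0)
    by (apply (orient_C_lt0 t i j k); auto; lia).
  rewrite <- (Rmult_0_r (scale_factor t * scale_factor t)).
  apply Rmult_lt_compat_l; [apply Rmult_lt_0_compat|]; assumption.
Qed.
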